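(* Let $d,k$ be integers with $2\leq d\leq\frac{k+1}{2}$, $\Sigma_k=\{\sigma_1,\ldots,\sigma_k\}$, $\Sigma_d=\{\sigma_1,\ldots,\sigma_d\}$. Consider $r\geq2$ users over $\Sigma_k$, where user 1 has confusion graph $G_1=(\Sigma_k,\{ab\mid a\in\Sigma_k,\ b\in\Sigma_k\setminus\Sigma_d,\ a\neq b\})$ and users $2,\ldots,r$ have confusion graphs $G_2,\ldots,G_r$ each containing (as edge sets) the complement $\overline{G_1}=(\Sigma_k,\{ab\mid a,b\in\Sigma_d,\ a\neq b\})$. If $(\alpha\log_2 d,R_2,\ldots,R_r)$ with $\alpha\in[0,1]$ is a feasible rate vector, then $\sum_{i=2}^r R_i\leq(1-\alpha)\log_2(k-d+1)$.
   Context: Setting: a sender broadcasts a word of length $n$ over a finite alphabet $\Sigma$ to $r$ users; user $i$ has a confusion graph $G_i$ on vertex set $\Sigma$, where $ab$ is an edge iff user $i$ cannot distinguish letters $a$ and $b$. Two words $x,y\in\Sigma^n$ are distinguishable by user $i$ if there is a coordinate $t$ with $x_t\neq y_t$ and $x_ty_t$ not an edge of $G_i$. A vector $(m_1,\ldots,m_r)$ of positive integers is feasible for length $n$ if there is a map $E:[m_1]\times\cdots\times[m_r]\to\Sigma^n$ such that for every $i$ and all tuples $a,a'$ with $a_i\neq a'_i$, $E(a)$ and $E(a')$ are distinguishable by user $i$. A rate vector $(R_1,\ldots,R_r)$ is feasible if there is a sequence of feasible vectors for lengths $n\to\infty$ with $R_i=\lim_{n\to\infty}\frac{\log_2 m_i^{(n)}}{n}$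 for all $i$. *)

From Stdlib Require Import Reals.
From mathcomp Require Import all_boot.
Open Scope R_scope.

(* Alphabet Sigma_k = 'I_k (letter sigma_{j+1} is the ordinal j).
   A confusion graph is a boolean relation on 'I_k (ab edge iff G a b). *)

Definition log2 (x : R) : R := (ln x / ln 2).

Definition distinguishable {k n : nat} (G : rel 'I_k) (x y : 'I_n -> 'I_k) : Prop :=
  exists t : 'I_n, x t <> y t /\ ~~ G (x t) (y t).

Definition feasible_vec (k r n : nat) (G : 'I_r -> rel 'I_k) (m : 'I_r -> nat) : Prop :=
  (forall i, 0 < m i)%N /\
  exists E : ('I_r -> nat) -> ('I_n -> 'I_k),
    forall a a' : 'I_r -> nat,
      (forall i, a i < m i)%N -> (forall i, a' i < m i)%N ->
      forall i, a i <> a' i -> distinguishable (G i) (E a) (E a').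

Definition feasible_rate (k r : nat) (G : 'I_r -> rel 'I_k) (Rt : 'I_r -> R) : Prop :=
  exists (N : nat -> nat) (M : nat -> 'I_r -> nat),
    (forall B, exists J, forall j, (J <= j)%N -> (B <= N j)%N) /\
    (forall j, feasible_vec k r (N j) G (M j)) /\
    (forall i, Un_cv (fun j => (log2 (INR (M j i)) / INR (N j))) (Rt i)).

Definition G1 (k d : nat) : rel 'I_k :=
  fun a b => (a != b) && ((d <= a)%N || (d <= b)%N).

Definition G1c (k d : nat) : rel 'I_k :=
  fun a b => (a != b) && (a < d)%N && (b < d)%N.

(* Fix the message [a] of user 1 and keep, from each codeword [E (a, b)], only its letters
   in Sigma_d.  User 1 tells letters apart only inside Sigma_d, so the sets [U a] of words of
   Sigma_d^n agreeing with some [E (a, b)] on those coordinates are pairwise disjoint and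
   [sum_a |U a| <= d ^ n].  Users 2..r do not tell letters of Sigma_d apart, so the codewords
   [E (a, b)], [b] ranging over their messages, already differ in their pattern: which
   coordinates carry a letter of Sigma_d, and which outer letter sits at the others.  Each
   pattern of [E (a, b)] spans a subcube of [U a], and a counting inequality, proved by
   induction on [n] from the convexity of [x ^ c], bounds the number of such patterns by
   [|U a| ^ c] with [c = log_d (k - d + 1)].  Hence [m_1 (prod_(i >= 2) m_i) ^ (1/c) <= d ^ n];
   taking logarithms, dividing by [n] and letting [n] grow gives
   [alpha + (sum_(i >= 2) R_i) / log2 (k - d + 1) <= 1]. *)

From Stdlib Require Import Reals Lra.
From HB Require Import structures.
From mathcomp Require Import all_boot zify.
Open Scope R_scope.

HB.instance Definition _ := Monoid.isComLaw.Build R 0 Rplus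
  (fun a b c => esym (Rplus_assoc a b c)) Rplus_comm Rplus_0_l.

Lemma INR_sum I r (P : pred I) (F : I -> nat) :
  INR (\sum_(i <- r | P i) F i) = \big[Rplus/0]_(i <- r | P i) INR (F i).
Proof. exact: (big_morph _ plus_INR). Qed.

Lemma INR_expn a b : INR (a ^ b)%N = INR a ^ b.
Proof. by elim: b => [|b IH]; rewrite ?expn0 // expnS mult_INR IH. Qed.

Lemma leR_sum I r (P : pred I) (F G : I -> R) : (forall i, P i -> F i <= G i) ->
  \big[Rplus/0]_(i <- r | P i) F i <= \big[Rplus/0]_(i <- r | P i) G i.
Proof.
by move=> FG; apply: big_ind2 => *; [apply: Rle_refl | apply: Rplus_le_compat | apply: FG].
Qed.

Lemma ln_gt0 x : 1 < x -> 0 < ln x.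
Proof. by move=> x_gt1; rewrite -ln_1; apply: ln_increasing; lra. Qed.

Lemma log2_gt0 x : 1 < x -> 0 < log2 x.
Proof. by move=> x_gt1; apply: Rdiv_lt_0_compat; apply: ln_gt0; lra. Qed.

Lemma ln_le x y : 0 < x -> x <= y -> ln x <= ln y.
Proof. by move=> x_gt0 [x_lt_y | <-]; [left; apply: ln_increasing | apply: Rle_refl]. Qed.

Lemma Rlog_ge1 b x : 1 < b -> b <= x -> 1 <= Rlog b x.
Proof.
move=> b_gt1 b_le_x; have ln_b_gt0 := ln_gt0 b b_gt1.
have := ln_le b x ltac:(lra) b_le_x.
rewrite /Rlog -(Rdiv_diag (ln b)); last by lra.
by move=> ?; apply: Rmult_le_compat_r; [left; apply: Rinv_0_lt_compat |].
Qed.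

(* [Rpower 0 c] is [1]; [rpow] sets [0 ^ c] to [0] instead. *)
Definition rpow (x c : R) : R := if Rle_dec x 0 then 0 else Rpower x c.

Lemma rpow_gt0 x c : 0 < x -> rpow x c = Rpower x c.
Proof. by move=> x_gt0; rewrite /rpow; case: Rle_dec => //= ?; lra. Qed.

Lemma rpow0 c : rpow 0 c = 0.
Proof. by rewrite /rpow; case: Rle_dec => //= -[]; apply: Rle_refl. Qed.

Lemma rpow_ge0 x c : 0 <= rpow x c.
Proof. by rewrite /rpow; case: Rle_dec => ? /=; [apply: Rle_refl | left; apply: exp_pos]. Qed.

Lemma Rpower_1_l c : Rpower 1 c = 1.
Proof. by rewrite /Rpower ln_1 Rmult_0_r exp_0. Qed.

Lemma Rpower_le_self t c : 1 <= c -> 0 < t <= 1 -> Rpower t c <= t.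
Proof.
move=> c_ge1 t_01.
have le1 : Rpower t (c - 1) <= 1.
  by rewrite -{2}(Rpower_1_l (c - 1)); apply: Rle_Rpower_l; lra.
have -> : c = 1 + (c - 1) by ring.
rewrite Rpower_plus Rpower_1; [nra | lra].
Qed.

Lemma Rpower_superadditive s b c : 1 <= c -> 0 < s -> 0 < b ->
  Rpower s c + Rpower b c <= Rpower (s + b) c.
Proof.
move=> c_ge1 s_gt0 b_gt0.
(* x^c = (x/(s+b))^c (s+b)^c <= x/(s+b) (s+b)^c, and the two weights add up to 1 *)
have share x : 0 < x <= s + b -> Rpower x c <= x / (s + b) * Rpower (s + b) c.
  move=> x_bnd; have t_01 : 0 < x / (s + b) <= 1.
    have : x / (s + b) * (s + b) = x by field; lra.
    have : 0 < x / (s + b) by apply: Rdiv_lt_0_compat; lra.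
    nra.
  have -> : Rpower x c = Rpower (x / (s + b)) c * Rpower (s + b) c.
    by rewrite Rpower_mult_distr; try lra; congr Rpower; field; lra.
  by apply: Rmult_le_compat_r; [left; apply: exp_pos | exact: Rpower_le_self].
have := share s ltac:(lra); have := share b ltac:(lra).
have : s / (s + b) * Rpower (s + b) c + b / (s + b) * Rpower (s + b) c = Rpower (s + b) c
  by field; lra.
lra.
Qed.

Lemma Rpower_increment_le s a b c : 1 <= c -> 0 <= s -> 0 < a < b ->
  Rpower (s + a) c - Rpower a c <= Rpower (s + b) c - Rpower b c.
Proof.
move=> c_ge1 s_ge0 a_lt_b.
pose f x := Rpower (s + x) c - Rpower x c.
pose f' x := c * Rpower (s + x) (c - 1) * 1 - c * Rpower x (c - 1).
have deriv_f x : a <= x <= b -> derivable_pt_lim f x (f' x).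
  move=> x_ab; apply: derivable_pt_lim_minus; last by apply: derivable_pt_lim_power; lra.
  apply: (derivable_pt_lim_comp (fun x => s + x) (fun y => Rpower y c)).
    rewrite -[1]Rplus_0_l; apply: derivable_pt_lim_plus.
      exact: derivable_pt_lim_const.
    exact: derivable_pt_lim_id.
  by apply: derivable_pt_lim_power; lra.
have [x [f_ab x_ab]] := MVT_cor2 f f' a b (proj2 a_lt_b) deriv_f.
have : Rpower x (c - 1) <= Rpower (s + x) (c - 1) by apply: Rle_Rpower_l; [lra | split; lra].
move=> pow_le; rewrite /f /f' in f_ab.
have : 0 <= (c * Rpower (s + x) (c - 1) * 1 - c * Rpower x (c - 1)) * (b - a).
  by apply: Rmult_le_pos; nra.
lra.
Qed.

Lemma rpow_increment_le s a b c : 1 <= c -> 0 <= s -> 0 <= a <= b ->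
  rpow (s + a) c - rpow a c <= rpow (s + b) c - rpow b c.
Proof.
move=> c_ge1 s_ge0 a_le_b.
have [-> | s_gt0] : s = 0 \/ 0 < s by lra.
  by rewrite !Rplus_0_l; lra.
have [-> | a_gt0] : a = 0 \/ 0 < a by lra.
  have [-> | b_gt0] : b = 0 \/ 0 < b by lra.
    by rewrite Rplus_0_r rpow0; lra.
  rewrite Rplus_0_r rpow0 !rpow_gt0; try lra.
  by have := Rpower_superadditive s b c c_ge1 s_gt0 b_gt0; lra.
have [-> | a_lt_b] : a = b \/ a < b by lra.
  lra.
by rewrite !rpow_gt0; try lra; apply: Rpower_increment_le; lra.
Qed.

Lemma sum_ge_const m (u : 'I_m -> R) mu : (forall v, mu <= u v) ->
  INR m * mu <= \big[Rplus/0]_(v < m) u v.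
Proof.
elim: m u => [|m IH] u u_ge; first by rewrite big_ord0 /=; lra.
rewrite S_INR big_ord_recr /=.
have /= := IH (fun v => u (widen_ord (leqnSn m) v)) (fun v => u_ge _).
by have := u_ge ord_max; lra.
Qed.

(* Add the summands one at a time: by [rpow_increment_le] the gap
   [f (x + y) - f x - f y] of [f := rpow ^~ c] only grows with [x] and [y]. *)
Lemma rpow_sum_gap m (u : 'I_m -> R) mu c : 1 <= c -> 0 <= mu ->
  (forall v, mu <= u v) ->
  rpow (mu * INR m) c - INR m * rpow mu c <=
  rpow (\big[Rplus/0]_(v < m) u v) c - \big[Rplus/0]_(v < m) rpow (u v) c.
Proof.
move=> c_ge1 mu_ge0; elim: m u => [|m IH] u u_ge.
  by rewrite !big_ord0 /= Rmult_0_r rpow0; lra.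
rewrite S_INR !big_ord_recr /=.
have /= IHm := IH (fun v => u (widen_ord (leqnSn m) v)) (fun v => u_ge _).
set S := \big[Rplus/0]_(v < m) u _ in IHm *.
have S_ge : INR m * mu <= S by apply: sum_ge_const => v; apply: u_ge.
have u_max := u_ge ord_max; have m_ge0 := pos_INR m.
have mum_ge0 : 0 <= mu * INR m by apply: Rmult_le_pos.
have := rpow_increment_le S mu (u ord_max) c c_ge1 ltac:(lra) ltac:(lra).
have := rpow_increment_le mu (mu * INR m) S c c_ge1 mu_ge0 ltac:(lra).
rewrite (Rplus_comm S mu); have -> : mu * (INR m + 1) = mu + mu * INR m by ring.
lra.
Qed.

Lemma rpow_sum_ge m (u : 'I_m -> R) mu c : (0 < m)%N -> 1 <= c -> 0 <= mu ->
  (forall v, mu <= u v) ->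
  \big[Rplus/0]_(v < m) rpow (u v) c + (Rpower (INR m) c - INR m) * rpow mu c <=
  rpow (\big[Rplus/0]_(v < m) u v) c.
Proof.
move=> m_gt0 c_ge1 mu_ge0 u_ge.
have := rpow_sum_gap m u mu c c_ge1 mu_ge0 u_ge.
suff -> : rpow (mu * INR m) c = Rpower (INR m) c * rpow mu c by lra.
have m_pos : 0 < INR m by apply: lt_0_INR; apply/ltP.
have [-> | mu_gt0] : mu = 0 \/ 0 < mu by lra.
  by rewrite Rmult_0_l rpow0 Rmult_0_r.
rewrite !rpow_gt0 ?Rpower_mult_distr // 1?Rmult_comm //.
exact: Rmult_lt_0_compat.
Qed.

Lemma leq_card_bigcup (T I : finType) (A : I -> {set T}) :
  (#|\bigcup_i A i| <= \sum_i #|A i|)%N.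
Proof.
elim/big_rec2: _ => [|i n U _ le_Un]; first by rewrite cards0.
by rewrite (leq_trans (leq_card_setU _ _).1) ?leq_add2l.
Qed.

Lemma leq_card_bigcup_common (T : finType) m (A : 'I_m -> {set T}) (B : {set T}) :
  (0 < m)%N -> (forall i, B \subset A i) ->
  (#|\bigcup_i A i| + m.-1 * #|B| <= \sum_i #|A i|)%N.
Proof.
move=> m_gt0 B_sub.
have -> : (\sum_i #|A i| = \sum_i #|A i :\: B| + m * #|B|)%N.
  rewrite -[m in (m * _)%N]card_ord -sum_nat_const -big_split /=.
  by apply: eq_bigr => i _; rewrite -(cardsID B (A i)) addnC (setIidPr (B_sub i)).
have cover : \bigcup_i A i \subset B :|: \bigcup_i (A i :\: B).
  apply/subsetP => x /bigcupP [i _ Ax]; rewrite inE.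
  case: (boolP (x \in B)) => //= xNB; apply/bigcupP; exists i => //.
  by rewrite inE xNB.
have := leq_trans (subset_leq_card cover) (leq_card_setU _ _).1.
have := @leq_card_bigcup _ _ (fun i => A i :\: B).
have : (m * #|B| = m.-1 * #|B| + #|B|)%N by rewrite -{1}(prednK m_gt0) mulSn addnC.
lia.
Qed.

Lemma sum_card_disjoint (T : finType) m (F : 'I_m -> {set T}) :
  (forall i j, i != j -> [disjoint F i & F j]) -> (\sum_i #|F i| <= #|T|)%N.
Proof.
move=> disjF; under eq_bigr do rewrite -sum1_card.
by rewrite -(partition_disjoint_bigcup _ _ disjF) sum1_card max_card.
Qed.

Section Patterns.

Variables d q : nat.

(* A pattern [y] fixes the coordinates where it is [None] and frees those where it is
   [Some c], [c] recording one of [q] outer letters; [cube y f] is the set of words that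
   agree with [f] on the fixed coordinates. *)
Definition cube {n} (y : n.-tuple (option 'I_q)) (f : n.-tuple 'I_d) : {set n.-tuple 'I_d} :=
  [set z | [forall t, (tnth y t == None) ==> (tnth z t == tnth f t)]].

Definition patterns {n} (U : {set n.-tuple 'I_d}) : {set n.-tuple (option 'I_q)} :=
  [set y | [exists f, cube y f \subset U]].

Definition slice {n} (U : {set n.+1.-tuple 'I_d}) (v : 'I_d) : {set n.-tuple 'I_d} :=
  [set z : n.-tuple 'I_d | [tuple of v :: z] \in U].

Lemma cube_self n (y : n.-tuple (option 'I_q)) f : f \in cube y f.
Proof. by rewrite inE; apply/forallP => t; apply/implyP. Qed.

Lemma mem_cube_cons n y0 (y : n.-tuple (option 'I_q)) (f0 z0 : 'I_d) (f z : n.-tuple 'I_d) :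
  ([tuple of z0 :: z] \in cube [tuple of y0 :: y] [tuple of f0 :: f]) =
  ((y0 == None) ==> (z0 == f0)) && (z \in cube y f).
Proof.
rewrite !inE; apply/forallP/andP => [fixed | [fixed0 /forallP fixed] t].
  by split; [have := fixed ord0 | apply/forallP => t; have := fixed (lift ord0 t)];
    rewrite ?tnth0 ?tnthS.
by case: (unliftP ord0 t) => [j ->|->]; rewrite ?tnthS ?tnth0.
Qed.

Lemma patterns_mono {n} {U V : {set n.-tuple 'I_d}} :
  U \subset V -> patterns U \subset patterns V.
Proof.
move=> UV; apply/subsetP => y; rewrite !inE => /existsP [f yfU].
by apply/existsP; exists f; apply: subset_trans UV.
Qed.

Lemma card_slices n (U : {set n.+1.-tuple 'I_d}) : #|U| = (\sum_v #|slice U v|)%N.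
Proof.
rewrite -sum1_card (partition_big (fun z : n.+1.-tuple 'I_d => thead z) predT) //=.
apply: eq_bigr => v _.
have cons_inj : injective (fun z : n.-tuple 'I_d => [tuple of v :: z]).
  by move=> z1 z2 /(congr1 (fun t => behead (val t))) /val_inj.
rewrite -(card_imset _ cons_inj) -sum1_card; apply: eq_bigl => z.
case/tupleP: z => z0 z; rewrite theadE; apply/andP/imsetP => [[zU /eqP <-] | ].
  by exists z; rewrite ?inE.
move=> [w wU /(congr1 val) [-> /val_inj ->]].
by rewrite inE in wU; rewrite wU eqxx.
Qed.

Lemma card_patterns_cons n (U : {set n.+1.-tuple 'I_d}) : (0 < d)%N ->
  (#|patterns U| + d.-1 * #|patterns (\bigcap_v slice U v)| <=
   \sum_v #|patterns (slice U v)| + q * #|patterns (\bigcap_v slice U v)|)%N.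
Proof.
move=> d_gt0; set I := \bigcap_v slice U v.
set N := [set y : n.+1.-tuple (option 'I_q) | thead y == None].
(* a fixed first coordinate [f0] leaves a pattern of the slice at [f0] *)
have fixed_head : patterns U :&: N \subset
    [set [tuple of None :: y] | y : n.-tuple (option 'I_q) in \bigcup_v patterns (slice U v)].
  apply/subsetP => y; case/tupleP: y => y0 y; rewrite !inE theadE.
  case/andP => /existsP [f]; case/tupleP: f => f0 f yfU /eqP y0N; subst y0.
  apply/imsetP; exists y => //; apply/bigcupP; exists f0 => //.
  rewrite inE; apply/existsP; exists f; apply/subsetP => z zyf.
  by rewrite inE; apply: (subsetP yfU); rewrite mem_cube_cons zyf !eqxx.
(* a free first coordinate leaves a pattern of every slice *)
have free_head : patterns U :\: N \subset
    [set [tuple of Some p.1 :: p.2]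
       | p : 'I_q * n.-tuple (option 'I_q) in setX [set: 'I_q] (patterns I)].
  apply/subsetP => y; case/tupleP: y => y0 y; rewrite !inE theadE.
  case/andP => y0N /existsP [f]; case/tupleP: f => f0 f yfU.
  case: y0 y0N yfU => [c|] // _ yfU.
  apply/imsetP; exists (c, y) => //; rewrite !inE /=.
  apply/existsP; exists f; apply/subsetP => z zyf.
  by apply/bigcapP => v _; rewrite inE; apply: (subsetP yfU); rewrite mem_cube_cons zyf.
have := cardsID N (patterns U).
have := leq_trans (subset_leq_card fixed_head) (leq_imset_card _ _).
have := leq_trans (subset_leq_card free_head) (leq_imset_card _ _).
rewrite cardsX cardsT card_ord.
have /= := @leq_card_bigcup_common _ d (fun v => patterns (slice U v)) (patterns I) d_gt0
  (fun v => patterns_mono (bigcap_inf v isT)).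
move=> cover_le free_le fixed_le split_card.
rewrite -split_card -addnA [X in (_ + X <= _)%N]addnC addnA.
by apply: leq_add free_le; apply: leq_trans cover_le; rewrite leq_add2r.
Qed.

Lemma card_set_tuple0 (T : finType) (A : {set 0.-tuple T}) x : x \in A -> #|A| = 1%N.
Proof.
move=> xA; apply/eqP; rewrite eqn_leq card_gt0; apply/andP; split; last by apply/set0Pn; exists x.
by rewrite -(expn0 #|T|) -card_tuple max_card.
Qed.

Lemma card_patterns_le n (U : {set n.-tuple 'I_d}) : (2 <= d)%N -> (d <= q + 1)%N ->
  INR #|patterns U| <= rpow (INR #|U|) (Rlog (INR d) (INR (q + 1))).
Proof.
move=> d_ge2 d_le; set c := Rlog _ _.
have d_gt1 : 1 < INR d by apply: lt_1_INR; apply/ltP.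
have c_ge1 : 1 <= c by apply: Rlog_ge1 => //; apply: le_INR; apply/leP.
elim: n U => [|n IH] U.
  case: (posnP #|patterns U|) => [-> | /card_gt0P [y yU]]; first exact: rpow_ge0.
  have := yU; rewrite inE => /existsP [f /subsetP /(_ f (cube_self _ _ _)) fU].
  rewrite (card_set_tuple0 _ _ _ yU) (card_set_tuple0 _ _ _ fU) /=.
  by rewrite rpow_gt0 ?Rpower_1_l; [apply: Rle_refl | lra].
have d_gt0 : (0 < d)%N by apply: ltnW.
set I := \bigcap_v slice U v.
have slice_ge v : INR #|I| <= INR #|slice U v|.
  by apply: le_INR; apply/leP; apply: subset_leq_card; apply: bigcap_inf.
have /= := rpow_sum_ge d (fun v => INR #|slice U v|) (INR #|I|) c d_gt0 c_ge1 (pos_INR _) slice_ge.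
rewrite -INR_sum -card_slices Rpower_Rlog; try lra; last by apply: lt_0_INR; lia.
set RS := \big[Rplus/0]_(v < d) _; set RI := rpow _ c => gap.
have := le_INR _ _ (leP (card_patterns_cons _ U d_gt0)).
rewrite !plus_INR !mult_INR INR_sum -/I.
have -> : INR d.-1 = INR d - 1 by rewrite -{2}(prednK d_gt0) S_INR; ring.
set PS := \big[Rplus/0]_(v < d) _; set PI := INR #|patterns I| => step.
have PS_le : PS <= RS by apply: leR_sum => v _; apply: IH.
have PI_le : PI <= RI := IH I.
have q1_d : 0 <= INR (q + 1) - INR d by have := le_INR _ _ (leP d_le); lra.
have := Rmult_le_compat_l _ _ _ q1_d PI_le.
rewrite plus_INR /= in gap *; set PU := INR #|patterns U| in step *; nra.
Qed.

End Patterns.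

Lemma card_ge_patterns_root d q n (U : {set n.-tuple 'I_d}) P :
  (2 <= d)%N -> (d <= q + 1)%N -> (0 < P)%N -> (P <= #|patterns d q U|)%N ->
  Rpower (INR P) (/ Rlog (INR d) (INR (q + 1))) <= INR #|U|.
Proof.
move=> d_ge2 d_le P_gt0 P_le; set c := Rlog _ _.
have c_ge1 : 1 <= c by apply: Rlog_ge1; [apply: lt_1_INR; apply/ltP | apply: le_INR; apply/leP].
have P_pos : 0 < INR P by apply: lt_0_INR; apply/ltP.
have := Rle_trans _ _ _ (le_INR _ _ (leP P_le)) (card_patterns_le _ _ _ U d_ge2 d_le).
case: (posnP #|U|) => [-> | U_gt0]; first by rewrite rpow0; lra.
have U_pos : 0 < INR #|U| by apply: lt_0_INR; apply/ltP.
rewrite rpow_gt0 // -/c => P_le_U.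
have -> : INR #|U| = Rpower (Rpower (INR #|U|) c) (/ c).
  by rewrite Rpower_mult Rinv_r ?Rpower_1 //; lra.
by apply: Rle_Rpower_l => //; left; apply: Rinv_0_lt_compat; lra.
Qed.

Lemma packing_bound d q n m (U : 'I_m -> {set n.-tuple 'I_d}) P :
  (2 <= d)%N -> (d <= q + 1)%N -> (0 < m)%N -> (0 < P)%N ->
  (forall a, P <= #|patterns d q (U a)|)%N ->
  (forall a a', a != a' -> [disjoint U a & U a']) ->
  ln (INR m) / ln (INR d) + ln (INR P) / ln (INR (q + 1)) <= INR n.
Proof.
move=> d_ge2 d_le m_gt0 P_gt0 P_le disjU.
have d_gt1 : 1 < INR d by apply: lt_1_INR; apply/ltP.
have ln_d_gt0 := ln_gt0 _ d_gt1.
have ln_q1_gt0 : 0 < ln (INR (q + 1)).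
  by apply: ln_gt0; have := le_INR _ _ (leP d_le); lra.
have m_pos : 0 < INR m by apply: lt_0_INR; apply/ltP.
have := sum_ge_const m (fun a => INR #|U a|) _
  (fun a => card_ge_patterns_root _ _ _ (U a) _ d_ge2 d_le P_gt0 (P_le a)).
rewrite -INR_sum => /Rle_trans /(_ (le_INR _ _ (leP (sum_card_disjoint _ _ _ disjU)))).
rewrite card_tuple card_ord INR_expn => bound.
have := ln_le _ _ (Rmult_lt_0_compat _ _ m_pos (exp_pos _)) bound.
rewrite ln_mult ?ln_Rpower ?ln_pow; [| lra | done | exact: exp_pos].
rewrite /Rlog Rinv_div => ln_bound.
apply: (Rmult_le_reg_r (ln (INR d))) => //.
have -> : (ln (INR m) / ln (INR d) + ln (INR P) / ln (INR (q + 1))) * ln (INR d) =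
  ln (INR m) + ln (INR d) / ln (INR (q + 1)) * ln (INR P) by field; lra.
lra.
Qed.

Lemma card_ord_lt N b : (b <= N)%N -> #|[set x : 'I_N | (x < b)%N]| = b.
Proof.
move=> b_le.
have -> : [set x : 'I_N | (x < b)%N] = [set widen_ord b_le y | y in 'I_b].
  apply/setP => x; rewrite inE; apply/idP/imsetP => [x_b | [y _ ->]]; last exact: (ltn_ord y).
  by exists (Ordinal x_b) => //; apply: val_inj.
by rewrite card_imset ?card_ord // => y1 y2 /(congr1 val) /= /val_inj.
Qed.

Section Coding.

Variables k d : nat.

Definition outer (x : 'I_k) : option 'I_(k - d) :=
  if (d <= x)%N then insub (x - d)%N else None.

Lemma outer_None (x : 'I_k) : (outer x == None) = (x < d)%N.
Proof.
rewrite /outer ltnNge; case: leqP => //= d_le_x.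
case: insubP => // /negP []; by rewrite ltn_sub2r // (leq_ltn_trans d_le_x (ltn_ord x)).
Qed.

Lemma outer_inj (x y : 'I_k) : (d <= x)%N -> (d <= y)%N -> outer x = outer y -> x = y.
Proof.
move=> d_le_x d_le_y; rewrite /outer d_le_x d_le_y.
case: insubP => [u _ val_u|]; last by rewrite ltn_sub2r // (leq_ltn_trans d_le_x).
case: insubP => [v _ val_v|]; last by rewrite ltn_sub2r // (leq_ltn_trans d_le_y).
by move=> [eq_uv]; apply: ord_inj; rewrite -(subnK d_le_x) -(subnK d_le_y) -val_u -val_v eq_uv.
Qed.

Lemma outer_eq_G1c (x y : 'I_k) : outer x = outer y -> x != y -> G1c k d x y.
Proof.
move=> eq_xy neq_xy; rewrite /G1c neq_xy /=.
have same_side : (x < d)%N = (y < d)%N by rewrite -!outer_None eq_xy.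
case: (ltnP x d) same_side => [_ <- // | d_le_x /esym/negbT].
rewrite -leqNgt => d_le_y.
by case/eqP: neq_xy; apply: outer_inj.
Qed.

Variables (r n : nat) (G : 'I_r -> rel 'I_k) (m : 'I_r -> nat) (i0 : 'I_r).
Variable E : ('I_r -> nat) -> 'I_n -> 'I_k.
Hypothesis d_ge2 : (2 <= d)%N.
Hypothesis d_le : (d <= k - d + 1)%N.
Hypothesis m_gt0 : forall i, (0 < m i)%N.
Hypothesis G1_sub : forall a b, G1 k d a b -> G i0 a b.
Hypothesis G1c_sub : forall i, i != i0 -> forall a b, G1c k d a b -> G i a b.
Hypothesis E_distinguishes : forall a a' : 'I_r -> nat,
  (forall i, a i < m i)%N -> (forall i, a' i < m i)%N ->
  forall i, a i <> a' i -> distinguishable (G i) (E a) (E a').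

Definition word_pattern (w : 'I_n -> 'I_k) : n.-tuple (option 'I_(k - d)) :=
  [tuple outer (w t) | t < n].

Definition inner_agree (w : 'I_n -> 'I_k) : {set n.-tuple 'I_d} :=
  [set z : n.-tuple 'I_d | [forall t, (w t < d)%N ==> (val (tnth z t) == w t)]].

Lemma word_pattern_mem w : word_pattern w \in patterns d (k - d) (inner_agree w).
Proof.
rewrite inE; apply/existsP; exists [tuple insubd (Ordinal (ltnW d_ge2)) (val (w t)) | t < n].
apply/subsetP => z; rewrite !inE => /forallP z_fixed; apply/forallP => t; apply/implyP => wt_d.
move/implyP: (z_fixed t); rewrite !tnth_mktuple outer_None => /(_ wt_d) /eqP ->.
by rewrite val_insubd wt_d.
Qed.

Let Mx := (\sum_i m i)%N.
Let bound i := if i == i0 then 1%N else m i.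
Let others : {set {dffun forall i : 'I_r, 'I_Mx}} :=
  setXn (fun i => [set x : 'I_Mx | (x < bound i)%N]).
Let msg (a : nat) (b : {dffun forall i : 'I_r, 'I_Mx}) i := if i == i0 then a else val (b i).
Let codeword a b := E (msg a b).
Let inner (a : 'I_(m i0)) := \bigcup_(b in others) inner_agree (codeword a b).

Lemma card_others : #|others| = (\prod_(i | i != i0) m i)%N.
Proof.
rewrite cardsXn [RHS]big_mkcond /=; apply: eq_bigr => i _.
rewrite card_ord_lt /bound; first by case: eqP.
case: eqP => _; last by rewrite /Mx (bigD1 i) //= leq_addr.
by apply: leq_trans (m_gt0 i0) _; rewrite /Mx (bigD1 i0) //= leq_addr.
Qed.

Lemma others_i0 b : b \in others -> val (b i0) = 0%N.
Proof. by move/setXnP/(_ i0); rewrite inE /bound eqxx ltnS leqn0 => /eqP. Qed.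

Lemma msg_lt a b : (a < m i0)%N -> b \in others -> forall i, (msg a b i < m i)%N.
Proof.
move=> a_lt /setXnP b_oth i; have := b_oth i; rewrite inE /msg /bound.
by case: eqP => [-> | _].
Qed.

Lemma others_le_patterns a : (#|others| <= #|patterns d (k - d) (inner a)|)%N.
Proof.
have pattern_inj : {in others &, injective (fun b => word_pattern (codeword a b))}.
  move=> b b' b_oth b'_oth /= eq_pat; apply/ffunP => i; apply/eqP/contraT => neq_bi.
  have i_ne : i != i0.
    apply: contraNneq neq_bi => ->; apply/eqP/val_inj.
    by rewrite (others_i0 _ b_oth) (others_i0 _ b'_oth).
  have neq_msg : msg a b i <> msg a b' i.
    by rewrite /msg (negbTE i_ne) => /val_inj eq_bi; move/eqP: neq_bi.
  have [t [neq_wt not_G]] :=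
    E_distinguishes _ _ (msg_lt _ _ (ltn_ord a) b_oth) (msg_lt _ _ (ltn_ord a) b'_oth) _ neq_msg.
  case/negP: not_G; apply: G1c_sub i_ne _ _ (outer_eq_G1c _ _ _ _); last exact/eqP.
  by move: (congr1 (fun p => tnth p t) eq_pat); rewrite !tnth_mktuple.
rewrite -(card_in_imset pattern_inj); apply: subset_leq_card.
apply/subsetP => _ /imsetP [b b_oth ->].
exact: subsetP (patterns_mono _ _ (bigcup_sup b b_oth)) _ (word_pattern_mem _).
Qed.

Lemma inner_disjoint a a' : a != a' -> [disjoint inner a & inner a'].
Proof.
move=> neq_a; rewrite -setI_eq0; apply/eqP/setP => z; rewrite !inE.
apply/negP => /andP [/bigcupP [b b_oth z_b] /bigcupP [b' b'_oth z_b']].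
have neq_msg : msg a b i0 <> msg a' b' i0.
  by rewrite /msg eqxx => /val_inj eq_a; move/eqP: neq_a.
have [t [neq_wt not_G]] :=
  E_distinguishes _ _ (msg_lt _ _ (ltn_ord a) b_oth) (msg_lt _ _ (ltn_ord a') b'_oth) _ neq_msg.
(* user [i0] tells letters apart only inside [Sigma_d], where [z] agrees with both codewords *)
have : ~~ G1 k d (codeword a b t) (codeword a' b' t) by apply: contra not_G; apply: G1_sub.
rewrite /G1 (introN eqP neq_wt) negb_or -!ltnNge /= => /andP [wt_d w't_d].
have agree w u : u \in inner_agree w -> (w t < d)%N -> val (tnth u t) = w t.
  by rewrite inE => /forallP /(_ t) /implyP agree_t /agree_t /eqP.
apply/neq_wt/ord_inj; rewrite -(agree _ _ z_b wt_d); exact: agree _ _ z_b' w't_d.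
Qed.

Lemma coding_bound :
  ln (INR (m i0)) / ln (INR d) + ln (INR (\prod_(i | i != i0) m i)) / ln (INR (k - d + 1))
    <= INR n.
Proof.
rewrite -card_others.
apply: packing_bound inner_disjoint => //; last exact: others_le_patterns.
by rewrite card_others prodn_gt0.
Qed.

End Coding.

Lemma ln_prod I r (P : pred I) (F : I -> nat) : (forall i, P i -> (0 < F i)%N) ->
  ln (INR (\prod_(i <- r | P i) F i)) = \big[Rplus/0]_(i <- r | P i) ln (INR (F i)).
Proof.
move=> F_gt0; apply: (big_morph_in [pred x | (0 < x)%N] (fun x => ln (INR x))) => //.
- by move=> x y; rewrite !inE muln_gt0 => -> ->.
- move=> x y; rewrite !inE => x_gt0 y_gt0.
  by rewrite mult_INR ln_mult //; apply: lt_0_INR; apply/ltP.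
- by rewrite /= ln_1.
Qed.

Lemma sum_div I r (P : pred I) (F : I -> R) a :
  \big[Rplus/0]_(i <- r | P i) (F i / a) = (\big[Rplus/0]_(i <- r | P i) F i) / a.
Proof. by rewrite (big_morph (fun x => x / a) (fun x y => Rdiv_plus_distr x y a) (Rdiv_0_l a)). Qed.

Lemma Rdiv_cancel_r x y c : c <> 0 -> x / c / (y / c) = x / y.
Proof.
move=> c_neq0; have [-> | y_neq0] := Req_dec y 0; first by rewrite Rdiv_0_l !Rdiv_0_r.
by field.
Qed.

Lemma Rdiv_plus_div a b s l N : a / N / b + s / N / l = (a / b + s / l) / N.
Proof. by rewrite /Rdiv; ring. Qed.

(* [x / 0 = 0] in Stdlib, so no positivity of [y] is needed beyond [0 <= y]. *)
Lemma Rdiv_le1 x y : 0 <= y -> x <= y -> x / y <= 1.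
Proof.
move=> [y_gt0 | <-] x_le_y; last by rewrite Rdiv_0_r; lra.
by rewrite -(Rdiv_diag y); [apply: Rmult_le_compat_r; [left; apply: Rinv_0_lt_compat|] | lra].
Qed.

Lemma feasible_vec_bound k d r n (G : 'I_r -> rel 'I_k) (m : 'I_r -> nat) (i0 : 'I_r) :
  (2 <= d)%N -> (d <= k - d + 1)%N ->
  (forall a b, G1 k d a b -> G i0 a b) ->
  (forall i, i != i0 -> forall a b, G1c k d a b -> G i a b) ->
  feasible_vec k r n G m ->
  log2 (INR (m i0)) / log2 (INR d) +
    (\big[Rplus/0]_(i | i != i0) log2 (INR (m i))) / log2 (INR (k - d + 1)) <= INR n.
Proof.
move=> d_ge2 d_le G1_sub G1c_sub [m_gt0 [E E_dist]].
have ln2_neq0 : ln 2 <> 0 by apply: ln_neq_0; lra.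
rewrite /log2 sum_div !Rdiv_cancel_r // -ln_prod; last by move=> i _; apply: m_gt0.
exact: (coding_bound _ _ _ _ _ _ _ _ d_ge2 d_le m_gt0 G1_sub G1c_sub E_dist).
Qed.

Lemma cv_const a : Un_cv (fun _ => a) a.
Proof. by move=> e e_gt0; exists 0%nat => n _; rewrite /R_dist Rminus_diag Rabs_R0. Qed.

Lemma cv_div u l a : Un_cv u l -> Un_cv (fun j => u j / a) (l / a).
Proof. by move=> cv_u; apply: (CV_mult u (fun _ => / a)) => //; apply: cv_const. Qed.

Lemma cv_sum I r (P : pred I) (u : I -> nat -> R) (l : I -> R) :
  (forall i, P i -> Un_cv (u i) (l i)) ->
  Un_cv (fun j => \big[Rplus/0]_(i <- r | P i) u i j) (\big[Rplus/0]_(i <- r | P i) l i).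
Proof.
move=> cv_u; elim: r => [|x r IH].
  rewrite big_nil; apply: (Un_cv_ext (fun _ => 0)); last exact: cv_const.
  by move=> j; rewrite big_nil.
rewrite big_cons; case Px: (P x).
  apply: (Un_cv_ext (fun j => u x j + \big[Rplus/0]_(i <- r | P i) u i j)).
    by move=> j; rewrite big_cons Px.
  exact: CV_plus (cv_u x Px) IH.
by apply: (Un_cv_ext _ _ _ _ IH) => j; rewrite big_cons Px.
Qed.

Theorem corollary14 (d k r : nat) (Hd : (2 <= d)%N) (Hdk : (2 * d <= k + 1)%N)
  (Hr : (2 <= r)%N) (G : 'I_r -> rel 'I_k) (alpha : R) (Rt : 'I_r -> R) :
  (forall i : 'I_r, val i = 0%N -> forall a b, G i a b = G1 k d a b) ->
  (forall i : 'I_r, val i <> 0%N ->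
     (forall a b, G i a b = G i b a) /\ (forall a, ~~ G i a a) /\
     (forall a b, G1c k d a b -> G i a b)) ->
  (0 <= alpha <= 1) ->
  (forall i : 'I_r, val i = 0%N -> Rt i = (alpha * log2 (INR d))) ->
  feasible_rate k r G Rt ->
  (\big[Rplus/0]_(i : 'I_r | val i != 0%N) Rt i <= (1 - alpha) * log2 (INR (k - d + 1))).
Proof.
(* The bound holds at every block length. *)
move=> G_i0 G_others _ Rt_i0 [N [M [_ [feasM cvM]]]].
pose i0 : 'I_r := Ordinal (ltnW Hr).
have not_i0 i : (i != i0) = (val i != 0%N) by rewrite -(inj_eq val_inj).
have log2_d_gt0 : 0 < log2 (INR d) by apply: log2_gt0; apply: lt_1_INR; apply/ltP.
set L := log2 (INR (k - d + 1)).
have L_gt0 : 0 < L by apply: log2_gt0; apply: lt_1_INR; apply/ltP; lia.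
set S := \big[Rplus/0]_(i : 'I_r | val i != 0%N) Rt i.
pose rate j i := log2 (INR (M j i)) / INR (N j).
pose v j := rate j i0 / log2 (INR d) + (\big[Rplus/0]_(i | val i != 0%N) rate j i) / L.
have cv_v : Un_cv v (alpha + S / L).
  have -> : alpha = Rt i0 / log2 (INR d) by rewrite Rt_i0 // Rmult_div_l //; lra.
  by apply: CV_plus; apply: cv_div; [exact: cvM | apply: cv_sum => i _; exact: cvM].
have v_le1 j : v j <= 1.
  rewrite /v /rate sum_div Rdiv_plus_div -(eq_bigl _ _ not_i0).
  apply: (Rdiv_le1 _ _ (pos_INR _)).
  apply: (feasible_vec_bound _ _ _ _ _ _ i0 _ _ _ _ (feasM j)) => [||a b|i]; try lia.
    by rewrite G_i0.
  by rewrite not_i0 => /eqP /G_others [_ []].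
have := Rmult_le_compat_r L _ _ (Rlt_le _ _ L_gt0) (Rle_cv_lim v_le1 cv_v (cv_const 1)).
by rewrite Rmult_plus_distr_r /Rdiv Rmult_assoc Rinv_l; nra.
Qed.
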